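(* Let $n=2m-1$, $m\ge1$, let $\mathcal{C}$ be the set of maximal flags and $\mathcal{P}$ the set of points of $\mathrm{PG}(n,q)$. For $i\in[n+1]$ let $T_i$ be the $|\mathcal{C}|\times|\mathcal{P}|$ matrix with $T_i(c,X)=1$ if $c$ has type $i$ with respect to $X$ and $0$ otherwise, and for $j\in[m]$ let $F_j=q^j\sum_{i=m-j+1}^{m}T_i-\sum_{i=m+1}^{m+j}T_i$. Let $E_1=I_{\mathcal{P}}-\frac1{|\mathcal{P}|}J_{\mathcal{P}}$. Then for every $j\in[m]$ there is a non-zero constant $\alpha_j$ with $T_{m-j+1}^\top F_j=\alpha_jE_1$, and $T_h^\top F_j=0$ for all $h<m-j+1$.
   Context: A maximal flag of $\mathrm{PG}(n,q)$ is $(U_1,\dots,U_n)$ with $U_1\subset\cdots\subset U_n$ subspaces of $\mathbb{F}_q^{n+1}$, $\dim U_i=i$. Its type with respect to a point $X$ is the smallest $k\in[n]$ with $X\subseteq U_k$, and $n+1$ otherwise. $I_{\mathcal{P}}$ and $J_{\mathcal{P}}$ are the identity and all-one matrices indexed by $\mathcal{P}$. *)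

From HB Require Import structures.
From mathcomp Require Import all_boot all_order all_algebra all_field.
Unset Printing Implicit Defensive.
Import GRing.Theory Num.Theory.

Local Open Scope ring_scope.

(* Vectors of F^N, N = n+1 : row vectors 'rV[F]_N.  A subspace of F^N is
   represented by its (finite) set of vectors. *)
Section PG.
Variables (F : finFieldType) (N : nat).
Notation vec := 'rV[F]_N.

Definition is_subspace (U : {set vec}) : bool :=
  (0 \in U) && [forall u in U, forall v in U, forall a : F, a *: u + v \in U].

Definition sdim (U : {set vec}) : nat := \dim (<<enum U>>%VS).

Definition PGpoints : {set {set vec}} :=
  [set U : {set vec} | is_subspace U && (sdim U == 1%N)].

(* maximal flags (U_1 ⊂ ... ⊂ U_n), n = N-1; c i stands for U_(i+1) *)
Definition is_max_flag (c : {ffun 'I_N.-1 -> {set vec}}) : bool :=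
  [forall i, is_subspace (c i) && (sdim (c i) == i.+1)] &&
  [forall i : 'I_N.-1, forall j : 'I_N.-1, (i <= j)%N ==> (c i \subset c j)].

Definition PGflags : {set {ffun 'I_N.-1 -> {set vec}}} :=
  [set c | is_max_flag c].

(* type of the flag c w.r.t. the point X: the smallest k in [n] with
   X ⊆ U_k, and n+1 if there is none.  (enum 'I_n is increasing, and
   find returns n when no index satisfies the predicate.) *)
Definition flag_type (c : {ffun 'I_N.-1 -> {set vec}}) (X : {set vec}) : nat :=
  (find (fun i : 'I_N.-1 => X \subset c i) (enum 'I_N.-1)).+1.

Definition Tmat (i : nat) (c : {ffun 'I_N.-1 -> {set vec}}) (X : {set vec}) : rat :=
  (flag_type c X == i)%:R.

Definition Fmat (m j : nat) (c : {ffun 'I_N.-1 -> {set vec}}) (X : {set vec}) : rat :=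
  (#|F| ^ j)%:R * (\sum_(m - j + 1 <= i < m + 1) Tmat i c X)
  - \sum_(m + 1 <= i < m + j + 1) Tmat i c X.

Definition trmul (A B : {ffun 'I_N.-1 -> {set vec}} -> {set vec} -> rat)
  (X Y : {set vec}) : rat :=
  \sum_(c in PGflags) A c X * B c Y.

Definition E1 (X Y : {set vec}) : rat :=
  (X == Y)%:R - (#|PGpoints|%:R)^-1.

End PG.

From HB Require Import structures.
From mathcomp Require Import all_boot all_order all_algebra all_field.
From mathcomp Require Import ring zify.
Import GRing.Theory Num.Theory.
Local Open Scope ring_scope.
Set Implicit Arguments.
Unset Strict Implicit.

(* The group GL(N, q) acts on points and maximal flags, preserving types, and
   is 2-transitive on points.  Hence G := T_h^T F_j takes one value d on the
   diagonal of P x P and one value o off it.  A flag has (q^k - 1)/(q - 1)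
   points of type <= k, from which every row of F_j sums to zero; so every row
   of G sums to zero, d + (|P| - 1) o = 0, and G = d |P|/(|P| - 1) E_1.
   Finally d = #{flags of type h w.r.t. X} * w(h), where the weight w(h) of
   F_j is q^j for m - j < h <= m and 0 for h <= m - j. *)

Section Subspaces.
Variables (F : finFieldType) (N : nat).
Local Notation vec := 'rV[F]_N.
Local Notation q := #|F|.
Local Notation is_subspace := (is_subspace F N).
Local Notation sdim := (sdim F N).
Local Notation points := (PGpoints F N).

Lemma subspaceP (U : {set vec}) :
  reflect (0 \in U /\ forall a u v, u \in U -> v \in U -> a *: u + v \in U)
          (is_subspace U).
Proof.
apply: (iffP andP) => [[U0 /forallP UP]|[U0 UP]]; split => //.
  move=> a u v uU vU; move: (UP u); rewrite uU /= => /forallP/(_ v).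
  by rewrite vU /= => /forallP.
apply/forallP=> u; apply/implyP=> uU; apply/forallP=> v; apply/implyP=> vU.
by apply/forallP=> a; exact: UP.
Qed.

Lemma subspace0 U : is_subspace U -> 0 \in U.
Proof. by case/subspaceP. Qed.

Lemma subspaceD U u v : is_subspace U -> u \in U -> v \in U -> u + v \in U.
Proof. by move=> /subspaceP[_ UP] uU vU; rewrite -[u]scale1r UP. Qed.

Lemma subspaceZ U a u : is_subspace U -> u \in U -> a *: u \in U.
Proof. by move=> /subspaceP[U0 UP] uU; rewrite -[_ *: _]addr0 UP. Qed.

Lemma mem_span_subspace U v : is_subspace U -> (v \in <<enum U>>%VS) = (v \in U).
Proof.
move=> sU; apply/idP/idP => [vW|vU]; last by apply: memv_span; rewrite mem_enum.
rewrite (coord_span (X := in_tuple (enum U)) vW).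
apply: (big_ind (fun x => x \in U)); first exact: subspace0.
  by move=> x y; apply: subspaceD.
by move=> i _; apply: subspaceZ => //; rewrite -mem_enum mem_nth.
Qed.

Lemma card_subspace U : is_subspace U -> #|U| = (q ^ sdim U)%N.
Proof.
move=> sU; rewrite /sdim -card_vspace; apply: eq_card => v.
by rewrite mem_span_subspace.
Qed.

Lemma eq_sdim_card U k : is_subspace U -> (sdim U == k) = (#|U| == q ^ k)%N.
Proof. by move=> sU; rewrite card_subspace // eqn_exp2l // finNzRing_gt1. Qed.

Lemma subspaceT : is_subspace [set: vec].
Proof. by apply/subspaceP; split => [|a u v _ _]; rewrite inE. Qed.

Lemma card_setT_rV : #|[set: vec]| = (q ^ N)%N.
Proof. by rewrite cardsT card_mx mul1n. Qed.

Definition line (v : vec) : {set vec} := [set a *: v | a : F].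

Lemma mem_line v : v \in line v.
Proof. by apply/imsetP; exists 1; rewrite ?scale1r. Qed.

Lemma line_subset U v : is_subspace U -> (line v \subset U) = (v \in U).
Proof.
move=> sU; apply/subsetP/idP => [lU|vU x /imsetP[a _ ->]]; last exact: subspaceZ.
exact: lU (mem_line v).
Qed.

Lemma line_subspace v : is_subspace (line v).
Proof.
apply/subspaceP; split; first by apply/imsetP; exists 0; rewrite ?scale0r.
move=> a u w /imsetP[b _ ->] /imsetP[c _ ->]; apply/imsetP; exists (a * b + c) => //.
by rewrite scalerDl scalerA.
Qed.

Lemma card_line v : v != 0 -> #|line v| = q.
Proof.
move=> vnz; rewrite card_imset ?cardT ?size_enum // => a b /eqP.
by rewrite -subr_eq0 -scalerBl scaler_eq0 (negPf vnz) orbF subr_eq0 => /eqP.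
Qed.

Lemma line_PGpoint v : v != 0 -> line v \in points.
Proof.
move=> vnz; rewrite inE line_subspace /=.
by rewrite eq_sdim_card ?line_subspace // card_line ?expn1.
Qed.

Lemma PGpoint_subspace X : X \in points -> is_subspace X.
Proof. by rewrite inE => /andP[]. Qed.

Lemma card_PGpoint X : X \in points -> #|X| = q.
Proof. by rewrite inE => /andP[sX]; rewrite eq_sdim_card // expn1 => /eqP. Qed.

Lemma PGpoint_line X v : X \in points -> v \in X -> v != 0 -> X = line v.
Proof.
move=> pX vX vnz; apply/esym/eqP; rewrite eqEcard line_subset ?PGpoint_subspace //.
by rewrite vX card_PGpoint ?card_line ?leqnn.
Qed.

Lemma PGpointP X : reflect (exists2 v, v != 0 & X = line v) (X \in points).
Proof.
apply: (iffP idP) => [pX|[v vnz ->]]; last exact: line_PGpoint.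
have [v /andP[vnz vX]] : exists v, (v != 0) && (v \in X).
  apply/existsP; apply: contraTT (finNzRing_gt1 F) => /existsPn X0.
  rewrite -(card_PGpoint pX) -leqNgt; apply: (@leq_trans #|[set 0 : vec]|); last by rewrite cards1.
  apply/subset_leq_card.
  by apply/subsetP=> x xX; rewrite inE; have := X0 x; rewrite xX andbT negbK.
by exists v => //; apply: PGpoint_line.
Qed.

(* Double counting of the pairs (v, X) with 0 != v \in X \subset W. *)
Lemma card_PGpoints_sub W : is_subspace W ->
  (q.-1 * #|[set X in points | X \subset W]|)%N = #|W|.-1.
Proof.
move=> sW; set S := [set X in points | X \subset W].
rewrite (cardsD1 (0 : vec) W) subspace0 // add1n -pred_Sn -[#|W :\ _|]sum1_card.
transitivity (\sum_(v in W :\ (0 : vec)%R) \sum_(X in S) (v \in X : nat))%N; last first.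
  apply: eq_bigr => v; rewrite !inE => /andP[vnz vW].
  have lS : line v \in S by rewrite inE line_PGpoint // line_subset.
  rewrite (bigD1 (line v)) //= mem_line big1 // => X /andP[XS Xv].
  apply/eqP; rewrite eqb0; apply: contra Xv => vX; move: XS; rewrite inE.
  by case/andP=> pX _; rewrite (PGpoint_line pX vX vnz).
rewrite exchange_big /= mulnC -sum_nat_const; apply: eq_bigr => X.
rewrite inE => /andP[pX XW].
rewrite -(card_PGpoint pX) (cardsD1 (0 : vec) X) subspace0 ?PGpoint_subspace //.
rewrite add1n -pred_Sn -sum1_card [RHS]big_mkcond [LHS]big_mkcond /=.
apply: eq_bigr => v _; rewrite !inE.
by case: (v \in X) (v == 0) (v \in W) (subsetP XW v) => [] [] [] // /(_ isT).
Qed.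

Lemma two_le_card_PGpoints : (2 <= N)%N -> (1 < #|points|)%N.
Proof.
move=> N2; have := card_PGpoints_sub subspaceT; rewrite card_setT_rV.
rewrite (_ : [set X in points | X \subset setT] = points); last first.
  by apply/setP => X; rewrite inE subsetT andbT.
have q1 := finNzRing_gt1 F; have qN : (q ^ 2 <= q ^ N)%N by rewrite leq_exp2l.
move: qN q1; rewrite expnS expn1.
set a := (q ^ N)%N; set p := #|points|; set r := #|F| => qN q1 H; nia.
Qed.

End Subspaces.

Section Flags.
Variables (F : finFieldType) (N : nat).
Local Notation vec := 'rV[F]_N.
Local Notation q := #|F|.
Local Notation Q := (#|F|%:R : rat).
Local Notation points := (PGpoints F N).
Local Notation flags := (PGflags F N).
Local Notation ftype := (flag_type F N).

Lemma flag_subspace c (i : 'I_N.-1) : c \in flags -> is_subspace F N (c i).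
Proof. by rewrite inE => /andP[/forallP/(_ i)/andP[]]. Qed.

Lemma flag_sdim c (i : 'I_N.-1) : c \in flags -> sdim F N (c i) = i.+1.
Proof. by rewrite inE => /andP[/forallP/(_ i)/andP[_ /eqP]]. Qed.

Lemma flag_subset c (i j : 'I_N.-1) : c \in flags -> (i <= j)%N -> c i \subset c j.
Proof. by rewrite inE => /andP[_ /forallP/(_ i)/forallP/(_ j)/implyP]. Qed.

Lemma flag_type_le c X (i : 'I_N.-1) : c \in flags ->
  (ftype c X <= i.+1)%N = (X \subset c i).
Proof.
move=> cF; rewrite /flag_type ltnS; set p := fun i => X \subset c i.
apply/idP/idP => [le|Xc].
  have lt : (find p (enum 'I_N.-1) < N.-1)%N := leq_ltn_trans le (ltn_ord i).
  have := @nth_find _ i p (enum 'I_N.-1); rewrite has_find size_enum_ord => /(_ lt).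
  set k := nth i _ _; have kE : (k : nat) = find p (enum 'I_N.-1) by exact: nth_enum_ord.
  by move=> Xck; apply: subset_trans Xck (flag_subset cF _); rewrite kE.
rewrite leqNgt; apply: contraL Xc => /(before_find i).
by rewrite nth_ord_enum /p => ->.
Qed.

Lemma flag_type_leN c X : (0 < N)%N -> (ftype c X <= N)%N.
Proof.
move=> N0; apply: (@leq_ltn_trans N.-1); last by rewrite ltn_predL.
by rewrite -[X in (_ <= X)%N](size_enum_ord N.-1) find_size.
Qed.

Lemma card_PGpoints_type_le c k : c \in flags -> (0 < N)%N -> (k <= N)%N ->
  (q.-1 * #|[set Y in points | ftype c Y <= k]|)%N = (q ^ k).-1.
Proof.
move=> cF N0 kN; case: k kN => [|k] kN.
  rewrite (_ : [set _ in _ | _] = set0) ?cards0 ?muln0 //.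
  by apply/setP => Y; rewrite !inE ltn0 andbF.
have [kN'|kN'] := ltnP k N.-1.
  rewrite (_ : [set _ in _ | _] = [set Y in points | Y \subset c (Ordinal kN')]).
    by rewrite card_PGpoints_sub ?flag_subspace // card_subspace ?flag_subspace ?flag_sdim.
  by apply/setP => Y; rewrite !inE -(flag_type_le Y (Ordinal kN') cF).
have kE : k.+1 = N by apply/eqP; rewrite eqn_leq kN /= -(prednK N0) ltnS.
rewrite (_ : [set _ in _ | _] = [set Y in points | Y \subset [set: vec]]).
  by rewrite card_PGpoints_sub ?subspaceT // card_setT_rV kE.
by apply/setP => Y; rewrite !inE subsetT kE flag_type_leN.
Qed.

Lemma sum_PGpoints_type_le c k : c \in flags -> (0 < N)%N -> (k <= N)%N ->
  (\sum_(Y in points) ((ftype c Y <= k)%N%:R : rat)) * (Q - 1) = Q ^+ k - 1.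
Proof.
move=> cF N0 kN; rewrite -natr_sum -big_mkcondr sum1_card.
rewrite (eq_card (B := [set Y in points | (ftype c Y <= k)%N])) => [|Y]; last by rewrite inE.
have /(congr1 (GRing.natmul (1 : rat))) := card_PGpoints_type_le cF N0 kN.
have q0 : (0 < q)%N := ltnW (finNzRing_gt1 F).
by rewrite natrM mulrC -!subn1 !natrB ?expn_gt0 ?q0 // natrX.
Qed.

End Flags.

Lemma sum_indicator_nat (R : pzSemiRingType) (t a b : nat) :
  \sum_(a <= i < b) ((t == i)%:R : R) = ((a <= t) && (t < b))%N%:R.
Proof.
rewrite -natr_sum -big_mkcond sum1_count -mem_index_iota.
rewrite (eq_count (a2 := pred1 t)) ?count_uniq_mem ?iota_uniq // => i.
Qed.

Lemma indicator_nat_range (R : pzRingType) (t k1 k2 : nat) : (k1 <= k2)%N ->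
  ((k1 < t) && (t <= k2))%N%:R = ((t <= k2)%N%:R - (t <= k1)%N%:R : R).
Proof.
move=> k12; case: (leqP t k1) => [tk1|] /=; last by rewrite subr0.
by rewrite (leq_trans tk1 k12) subrr.
Qed.

Section FmatRows.
Variables (F : finFieldType) (N : nat).
Local Notation Q := (#|F|%:R : rat).
Local Notation points := (PGpoints F N).
Local Notation flags := (PGflags F N).
Local Notation ftype := (flag_type F N).

Definition Fmat_weight (m j t : nat) : rat :=
  Q ^+ j * ((t <= m)%N%:R - (t <= m - j)%N%:R) - ((t <= m + j)%N%:R - (t <= m)%N%:R).

Lemma FmatE m j c Y : Fmat F N m j c Y = Fmat_weight m j (ftype c Y).
Proof.
rewrite /Fmat /Tmat !sum_indicator_nat !addn1 !ltnS natrX.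
by rewrite !indicator_nat_range ?leq_subr ?leq_addr.
Qed.

(* After multiplying by q - 1 and counting points of type <= k, this is
   q^j (q^m - q^(m-j)) = q^(m+j) - q^m. *)
Lemma sum_Fmat_row m j c : c \in flags -> (0 < N)%N -> (j <= m)%N -> (m + j <= N)%N ->
  \sum_(Y in points) Fmat F N m j c Y = 0.
Proof.
move=> cF N0 jm mjN; have mN : (m <= N)%N := leq_trans (leq_addr j m) mjN.
have Q1 : Q - 1 != 0 by rewrite subr_eq0 pnatr_eq1 gtn_eqF ?finNzRing_gt1.
apply: (mulIf Q1); rewrite mul0r.
under eq_bigr do rewrite FmatE.
rewrite sumrB -mulr_sumr !sumrB mulrBl -mulrA !mulrBl.
rewrite !sum_PGpoints_type_le ?(leq_trans (leq_subr j m)) //.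
set r := (m - j)%N; have -> : m = (r + j)%N by rewrite subnK.
by rewrite !exprD; ring.
Qed.

End FmatRows.

Section LinearAction.
Variables (F : finFieldType) (N : nat).
Local Notation vec := 'rV[F]_N.
Local Notation flag := {ffun 'I_N.-1 -> {set vec}}.
Local Notation is_subspace := (is_subspace F N).
Local Notation sdim := (sdim F N).
Local Notation flags := (PGflags F N).
Local Notation ftype := (flag_type F N).

Definition mxact (A : 'M[F]_N) (S : {set vec}) : {set vec} := [set v *m A | v in S].

Definition mxact_flag (A : 'M[F]_N) (c : flag) : flag := [ffun i => mxact A (c i)].

Lemma mxact_line A v : mxact A (line v) = line (v *m A).
Proof. by rewrite /mxact /line -imset_comp; apply: eq_imset => a /=; rewrite scalemxAl. Qed.

Lemma subspace_mxact A S : is_subspace S -> is_subspace (mxact A S).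
Proof.
move=> /subspaceP[S0 SP]; apply/subspaceP; split.
  by apply/imsetP; exists 0 => //; rewrite mul0mx.
move=> a _ _ /imsetP[u uS ->] /imsetP[v vS ->]; apply/imsetP.
by exists (a *: u + v); [apply: SP | rewrite mulmxDl scalemxAl].
Qed.

Variable A : 'M[F]_N.
Hypothesis unitA : A \in unitmx.

Lemma mxactK : cancel (mxact A) (mxact (invmx A)).
Proof.
move=> S; rewrite /mxact -imset_comp (eq_imset _ (fun v => mulmxK unitA v)).
exact: imset_id.
Qed.

Lemma mxact_subset S T : (mxact A S \subset mxact A T) = (S \subset T).
Proof.
apply/idP/idP => [|]; last exact: imsetS.
by rewrite -{2}(mxactK S) -{2}(mxactK T); apply: imsetS.
Qed.

Lemma mxact_subspace S : is_subspace (mxact A S) = is_subspace S.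
Proof.
apply/idP/idP => [|]; last exact: subspace_mxact.
by rewrite -{2}(mxactK S); apply: subspace_mxact.
Qed.

Lemma sdim_mxact S : is_subspace S -> sdim (mxact A S) = sdim S.
Proof.
move=> sS; apply: (expnI (finNzRing_gt1 F)).
rewrite -!card_subspace ?mxact_subspace //.
by apply: card_imset; apply: can_inj (mulmxK unitA).
Qed.

Lemma mxact_flagK : cancel (mxact_flag A) (mxact_flag (invmx A)).
Proof. by move=> c; apply/ffunP => i; rewrite !ffunE mxactK. Qed.

Lemma mxact_flag_in c : (mxact_flag A c \in flags) = (c \in flags).
Proof.
rewrite !inE /is_max_flag; congr andb; apply: eq_forallb => i.
  by rewrite ffunE mxact_subspace; case: (boolP (is_subspace (c i))) => // /sdim_mxact->.
by apply: eq_forallb => k; rewrite !ffunE mxact_subset.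
Qed.

Lemma flag_type_mxact c X : ftype (mxact_flag A c) (mxact A X) = ftype c X.
Proof. by rewrite /flag_type; congr S; apply: eq_find => i /=; rewrite ffunE mxact_subset. Qed.

Lemma trmul_mxact h m j X Y :
  trmul F N (Tmat F N h) (Fmat F N m j) (mxact A X) (mxact A Y) =
  trmul F N (Tmat F N h) (Fmat F N m j) X Y.
Proof.
rewrite /trmul (reindex_inj (can_inj mxact_flagK)) /=.
by apply: eq_big => [c|c _]; rewrite ?mxact_flag_in // /Fmat /Tmat !flag_type_mxact.
Qed.

End LinearAction.

Section Transitivity.
Variables (F : finFieldType) (N : nat).
Local Notation vec := 'rV[F]_N.
Local Notation points := (PGpoints F N).

Lemma row_free_transitive k (U V : 'M[F]_(k, N)) : row_free U -> row_free V ->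
  exists2 g, g \in unitmx & U *m g = V.
Proof.
move=> freeU freeV; have [U' U'K] := row_freeP freeU.
have UU'V : U *m (U' *m V) = V by rewrite mulmxA U'K mul1mx.
have [|g unit_g Ug] := @complete_unitmx _ _ _ U (U' *m V).
  by rewrite UU'V (eqP freeU) (eqP freeV).
by exists g; rewrite // -Ug.
Qed.

Lemma row_free_col_mx_rV (x y : vec) : x != 0 -> ~~ (y <= x)%MS -> row_free (col_mx x y).
Proof.
move=> xnz yx; rewrite /row_free; apply/eqP/anti_leq; rewrite rank_leq_row /= -addsmxE.
have [le eq] := mxrank_leqif_sup (addsmxSl x y).
rewrite addsmx_sub submx_refl (negPf yx) rank_rV xnz in le eq.
by rewrite ltn_neqAle eq le.
Qed.

Lemma line_eq_sub (x y : vec) : y != 0 -> (y <= x)%MS -> line x = line y.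
Proof.
move=> ynz /sub_rVP[a yE].
have xnz : x != 0 by apply: contraNneq ynz => x0; rewrite yE x0 scaler0.
by apply: PGpoint_line; rewrite ?line_PGpoint // yE; apply/imsetP; exists a.
Qed.

Lemma PGpoints_transitive X X' : X \in points -> X' \in points ->
  exists2 A, A \in unitmx & mxact A X = X'.
Proof.
move=> /PGpointP[x xnz ->] /PGpointP[x' x'nz ->].
have free_rV (v : vec) : v != 0 -> row_free v by move=> vnz; rewrite /row_free rank_rV vnz.
have [A unitA xA] := row_free_transitive (free_rV x xnz) (free_rV x' x'nz).
by exists A; rewrite // mxact_line xA.
Qed.

Lemma PGpoints_2transitive X Y X' Y' :
  X \in points -> Y \in points -> X' \in points -> Y' \in points ->
  X != Y -> X' != Y' -> exists2 A, A \in unitmx & mxact A X = X' /\ mxact A Y = Y'.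
Proof.
move=> /PGpointP[x xnz ->] /PGpointP[y ynz ->] /PGpointP[x' x'nz ->] /PGpointP[y' y'nz ->].
have free2 (u v : vec) : u != 0 -> v != 0 -> line u != line v -> row_free (col_mx u v).
  move=> unz vnz uv; apply: row_free_col_mx_rV => //.
  by apply: contra uv => /(line_eq_sub vnz)->.
move=> /(free2 _ _ xnz ynz) freexy /(free2 _ _ x'nz y'nz) freexy'.
have [A unitA] := row_free_transitive freexy freexy'.
by rewrite mul_col_mx => /eq_col_mx[xA yA]; exists A; rewrite // !mxact_line xA yA.
Qed.

End Transitivity.

Section StandardFlag.
Variables (F : finFieldType) (N : nat).
Local Notation vec := 'rV[F]_N.
Local Notation flags := (PGflags F N).
Local Notation ftype := (flag_type F N).
Local Notation pid k := (pid_mx k : 'M[F]_N).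

Definition rowspace_set k (M : 'M[F]_(k, N)) : {set vec} := [set v : vec | (v <= M)%MS].

Lemma rowspace_set_subspace k (M : 'M[F]_(k, N)) : is_subspace F N (rowspace_set M).
Proof.
apply/subspaceP; split=> [|a u v]; rewrite !inE ?sub0mx // => uM vM.
by rewrite addmx_sub ?scalemx_sub.
Qed.

Lemma card_rowspace_set k (M : 'M[F]_(k, N)) : #|rowspace_set M| = (#|F| ^ \rank M)%N.
Proof.
have -> : rowspace_set M = [set w *m row_base M | w : 'rV_(\rank M)].
  apply/setP => v; rewrite inE -(eq_row_base M).
  by apply/submxP/imsetP => [[w ->]|[w _ ->]]; exists w.
by rewrite card_imset ?card_mx ?mul1n //; apply/row_free_inj/row_base_free.
Qed.

Lemma pid_mx_sub k l : (k <= l)%N -> (pid k <= pid l)%MS.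
Proof.
move=> kl; have -> : pid k = pid k *m pid l.
  by rewrite mul_pid_mx (minn_idPl kl) pid_mx_minv.
exact: submxMl.
Qed.

Lemma delta_sub_pid_mx (r : 'I_N) k : ((delta_mx 0 r : vec) <= pid k)%MS = (r < k)%N.
Proof.
apply/idP/idP => [/submxP[D dE]|rk].
  have : (delta_mx 0 r : vec) *m pid k = delta_mx 0 r.
    by rewrite dE -mulmxA mul_pid_mx minnn pid_mx_minv.
  move/rowP/(_ r); rewrite -rowE !mxE !eqxx /=.
  by case: (r < k)%N => // /eqP; rewrite eq_sym oner_eq0.
have <- : row r (pid k) = delta_mx 0 r.
  by apply/rowP => j; rewrite !mxE rk andbT eq_sym.
exact: row_sub.
Qed.

Lemma line_delta_PGpoint (r : 'I_N) : line (delta_mx 0 r : vec) \in PGpoints F N.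
Proof.
apply: line_PGpoint; apply/eqP => r0; have := delta_sub_pid_mx r 0.
by rewrite r0 sub0mx ltn0.
Qed.

Definition std_flag : {ffun 'I_N.-1 -> {set vec}} :=
  [ffun i : 'I_N.-1 => rowspace_set (pid i.+1)].

Lemma std_flag_in : std_flag \in flags.
Proof.
have iN (i : 'I_N.-1) : (i.+1 <= N)%N by rewrite (leq_trans (ltn_ord i)) ?leq_pred.
rewrite inE; apply/andP; split; apply/forallP => i.
  rewrite ffunE rowspace_set_subspace eq_sdim_card ?rowspace_set_subspace //.
  by rewrite card_rowspace_set rank_pid_mx ?iN ?eqxx.
apply/forallP => j; apply/implyP => ij; rewrite !ffunE; apply/subsetP => v.
by rewrite !inE => /submx_trans; apply; apply: pid_mx_sub.
Qed.

Lemma flag_type_std (r : 'I_N) : (r < N.-1)%N ->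
  ftype std_flag (line (delta_mx 0 r)) = r.+1.
Proof.
move=> rN; have ftypeE (i : 'I_N.-1) :
    (ftype std_flag (line (delta_mx 0%R r)) <= i.+1)%N = (r <= i)%N.
  rewrite flag_type_le ?std_flag_in // ffunE line_subset ?rowspace_set_subspace //.
  by rewrite inE delta_sub_pid_mx.
apply/eqP; rewrite eqn_leq (ftypeE (Ordinal rN)) leqnn /=.
have [-> //|r_gt0] := posnP r.
have r'N : (r.-1 < N.-1)%N := leq_ltn_trans (leq_pred r) rN.
have := ftypeE (Ordinal r'N); rewrite /= prednK //.
by rewrite ltnNge => ->; rewrite -ltnNge ltn_predL.
Qed.

End StandardFlag.

Lemma zero_rowsum_kernelE (R : numFieldType) (T : finType) (P : {set T}) (G : T -> T -> R) X0 :
  X0 \in P -> (1 < #|P|)%N ->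
  {in P, forall X, G X X = G X0 X0} ->
  (forall X Y X' Y', X \in P -> Y \in P -> X' \in P -> Y' \in P ->
     X != Y -> X' != Y' -> G X Y = G X' Y') ->
  \sum_(Y in P) G X0 Y = 0 ->
  {in P &, forall X Y,
     G X Y = G X0 X0 * #|P|%:R / (#|P|%:R - 1) * ((X == Y)%:R - #|P|%:R^-1)}.
Proof.
move=> PX0 P_gt1 Gdiag Goff rowsum0.
have cardP : #|P| = (#|P :\ X0|).+1 by rewrite (cardsD1 X0) PX0.
have [Y0 Y0X0 PY0] : exists2 Y0, Y0 != X0 & Y0 \in P.
  have /card_gt0P[Y0] : (0 < #|P :\ X0|)%N by rewrite -ltnS -cardP.
  by rewrite !inE => /andP[]; exists Y0.
set d := G X0 X0; set o := G X0 Y0; set p := (#|P|%:R : R).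
have p0 : p != 0 by rewrite pnatr_eq0 cardP.
have p1 : p - 1 != 0 by rewrite subr_eq0 pnatr_eq1 gtn_eqF.
have Go X Y : X \in P -> Y \in P -> X != Y -> G X Y = o.
  by move=> PX PY XY; apply: Goff; rewrite // eq_sym.
have rowsumE : d + o * (p - 1) = 0.
  rewrite -rowsum0 (bigD1 X0) //=; congr (_ + _).
  rewrite (eq_bigr (fun _ => o)) => [|Y /andP[PY YX0]]; last by rewrite Go // eq_sym.
  rewrite (eq_bigl (mem (P :\ X0))) => [|Y]; last by rewrite !inE andbC.
  by rewrite sumr_const /p cardP -addn1 natrD addrK mulr_natr.
have oE : o = - d / (p - 1).
  by apply: (mulIf p1); rewrite divfK // -(addKr d (o * _)) rowsumE addr0.
move=> X Y PX PY; have [<-|XY] := eqVneq X Y.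
  by rewrite Gdiag //= -/d -/p; field; rewrite p0 p1.
by rewrite Go //= oE -/d -/p; field; rewrite p0 p1.
Qed.

Section TFProduct.
Variables (F : finFieldType) (N m j : nat).
Local Notation Q := (#|F|%:R : rat).
Local Notation points := (PGpoints F N).
Local Notation flags := (PGflags F N).
Local Notation ftype := (flag_type F N).
Local Notation TF h := (trmul F N (Tmat F N h) (Fmat F N m j)).

Lemma Fmat_weight_low t : (t <= m - j)%N -> Fmat_weight F m j t = 0.
Proof.
move=> tmj; have tm : (t <= m)%N := leq_trans tmj (leq_subr j m).
by rewrite /Fmat_weight tmj tm (leq_trans tm (leq_addr j m)) !subrr mulr0 subr0.
Qed.

Lemma Fmat_weight_first : (0 < j <= m)%N -> Fmat_weight F m j (m - j + 1) = Q ^+ j.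
Proof.
case/andP=> j_gt0 jm; have mjm : (m - j + 1 <= m)%N by lia.
rewrite /Fmat_weight mjm (leq_trans mjm (leq_addr j m)) addn1 ltnn.
by rewrite /= mulr1n mulr0n !subr0 mulr1.
Qed.

Lemma trmul_TF_diag h X :
  TF h X X = #|[set c in flags | ftype c X == h]|%:R * Fmat_weight F m j h.
Proof.
rewrite /trmul (eq_bigr (fun c => (ftype c X == h)%:R * Fmat_weight F m j h)).
  rewrite -mulr_suml -natr_sum -big_mkcondr sum1_card; congr (_%:R * _).
  by apply: eq_card => c; rewrite inE.
by move=> c _; rewrite FmatE /Tmat; case: eqP => [->|]; rewrite ?mul0r.
Qed.

Hypotheses (N_ge2 : (2 <= N)%N) (jm : (j <= m)%N) (mjN : (m + j <= N)%N).

Lemma trmul_TF_E1 h X0 : X0 \in points ->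
  {in points &, forall X Y, TF h X Y =
     #|[set c in flags | ftype c X0 == h]|%:R * Fmat_weight F m j h
       * #|points|%:R / (#|points|%:R - 1) * E1 F N X Y}.
Proof.
move=> pX0; rewrite /E1 -trmul_TF_diag.
apply: zero_rowsum_kernelE; rewrite ?two_le_card_PGpoints //.
- move=> X pX; have [A unitA <-] := PGpoints_transitive pX0 pX.
  by rewrite trmul_mxact.
- move=> X Y X' Y' pX pY pX' pY' XY X'Y'.
  have [A unitA [<- <-]] := PGpoints_2transitive pX pY pX' pY' XY X'Y'.
  by rewrite trmul_mxact.
rewrite /trmul exchange_big /=; apply: big1 => c cF.
by rewrite -mulr_sumr sum_Fmat_row ?mulr0 // (leq_trans _ N_ge2).
Qed.

End TFProduct.

Theorem mainTheorem6 (F : finFieldType) (m : nat) (hm : (1 <= m)%N) :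
  forall j : nat, (1 <= j <= m)%N ->
    (exists2 alpha : rat, alpha != 0 &
       forall X Y, X \in PGpoints F (2 * m) -> Y \in PGpoints F (2 * m) ->
         trmul F (2 * m) (Tmat F (2 * m) (m - j + 1)) (Fmat F (2 * m) m j) X Y
         = alpha * E1 F (2 * m) X Y)
    /\
    (forall h : nat, (1 <= h)%N -> (h < m - j + 1)%N ->
       forall X Y, X \in PGpoints F (2 * m) -> Y \in PGpoints F (2 * m) ->
         trmul F (2 * m) (Tmat F (2 * m) h) (Fmat F (2 * m) m j) X Y = 0).
Proof.
move=> j jm; have /andP[j_gt0 j_le_m] := jm.
have N_ge2 : (2 <= 2 * m)%N by lia.
have mjN : (m + j <= 2 * m)%N by lia.
have r_lt : (m - j < 2 * m)%N by lia.
pose r := Ordinal r_lt; have r_ltN1 : (r < (2 * m).-1)%N by rewrite /=; lia.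
pose X0 := line (delta_mx 0 r : 'rV[F]_(2 * m)).
have TF_E1 := trmul_TF_E1 N_ge2 j_le_m mjN _ (line_delta_PGpoint F r).
split=> [|h h_gt0 h_lt X Y pX pY]; last first.
  by rewrite TF_E1 // Fmat_weight_low ?mulr0 ?mul0r //; lia.
eexists; last exact: TF_E1.
have count_gt0 : (0 < #|[set c in PGflags F (2 * m) | flag_type F (2 * m) c X0 == m - j + 1]|)%N.
  apply/card_gt0P; exists (std_flag F (2 * m)).
  by rewrite inE std_flag_in /X0 (flag_type_std _ r_ltN1) addn1 /=.
have P_gt1 := two_le_card_PGpoints F N_ge2.
have q_gt0 := ltnW (finNzRing_gt1 F).
by rewrite Fmat_weight_first // !mulf_neq0 ?invr_eq0 ?expf_neq0 ?subr_eq0 ?pnatr_eq1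
  ?pnatr_eq0 -?lt0n ?(gtn_eqF P_gt1) ?(ltnW P_gt1).
Qed.
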